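(* Let $\mathcal{C}_{\mathrm{norm}}:=\operatorname{conv}(\{\Sigma_e/\operatorname{Tr}(\Sigma_e)\}_{e\in\mathcal{E}})$ and let $\mathcal{P}_{\mathrm{norm}}$ be the set of distributions $P$ on $\mathbb{R}^{1\times p}$ with $\mathbb{E}_P[\mathbf{x}]=0$, finite second moments, $\mathbb{E}_P\|\mathbf{x}\|_2^2>0$ and $\mathbb{E}_P[\mathbf{x}^\top\mathbf{x}]/\mathbb{E}_P[\|\mathbf{x}\|_2^2]\in\mathcal{C}_{\mathrm{norm}}$. Let $\mathcal{L}$ be one of $\mathcal{L}_{\mathrm{normRCS}}$, $-\mathcal{L}_{\mathrm{normVar}}$, $\mathcal{L}_{\mathrm{normReg}}$ and let $V_k^*\in\arg\min_{V\in\mathcal{O}_{p\times k}}\max_{e\in\mathcal{E}}\mathcal{L}(V;P_e)$ (i.e. $V_k^*$ solves norm-maxRCS, norm-minPCA, norm-maxRegret respectively). Then: (i) for all $V\in\mathcal{O}_{p\times k}$, $\sup_{P\in\mathcal{P}_{\mathrm{norm}}}\mathcal{L}(V;P)=\max_{e\in\mathcal{E}}\mathcal{L}(V;P_e)$; (ii) for all $V,W\in\mathcal{O}_{p\times k}$, if $\max_e\mathcal{L}(V;P_e)<\max_e\mathcal{L}(W;P_e)$ then $\sup_{P\in\mathcal{P}_{\mathrm{norm}}}\mathcal{L}(V;P)<\sup_{P\in\mathcal{P}_{\mathrm{norm}}}\mathcal{L}(W;P)$; (iii) $V_k^*\in\arg\min_{V\in\mathcal{O}_{p\times k}}\sup_{P\in\mathcal{P}_{\mathrm{norm}}}\mathcal{L}(V;P)$;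 (iv) the conclusion of (iii) does not hold in general for the solutions of poolPCA and sepPCA.
   Context: Let $p\ge 1$ and $1\le k\le p$ be integers and $\mathcal{O}_{p\times k}:=\{V\in\mathbb{R}^{p\times k}: V^\top V=I_k\}$. Source domains are $\mathcal{E}=\{1,\dots,E\}$; for each $e$, $P_e$ is a distribution on $\mathbb{R}^{1\times p}$ with mean zero and finite covariance $\Sigma_e=\mathbb{E}[\mathbf{x}^\top\mathbf{x}]$, $\operatorname{Tr}(\Sigma_e)>0$; weights $w_e>0$, $\sum_e w_e=1$. For symmetric PSD $\Sigma$ with positive trace and $V\in\mathcal{O}_{p\times k}$: $\mathcal{L}_{\mathrm{normVar}}(V;\Sigma)=\operatorname{Tr}(V^\top\Sigma V)/\operatorname{Tr}(\Sigma)$, $\mathcal{L}_{\mathrm{normRCS}}(V;\Sigma)=(\operatorname{Tr}(\Sigma)-\operatorname{Tr}(V^\top\Sigma V))/\operatorname{Tr}(\Sigma)$ ($=\mathbb{E}\|\mathbf{x}-\mathbf{x}VV^\top\|_2^2/\mathbb{E}\|\mathbf{x}\|_2^2$), $\mathcal{L}_{\mathrm{normReg}}(V;\Sigma)=\mathcal{L}_{\mathrm{normRCS}}(V;\Sigma)-\min_{W\in\mathcal{O}_{p\times k}}\mathcal{L}_{\mathrm{normRCS}}(W;\Sigma)$; for $P$ with covariance $\Sigma$, $\mathcal{L}(V;P):=\mathcal{L}(V;\Sigma)$. poolPCA: $V^{\mathrm{pool}}\in\arg\max_V\operatorname{Tr}(V^\top(\sum_e w_e\Sigma_e)V)$. sepPCA: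 with $V^{*,e}\in\arg\max_V\operatorname{Tr}(V^\top\Sigma_eV)$ and $e_0$ the smallest index minimizing $\operatorname{Tr}((V^{*,e})^\top\Sigma_eV^{*,e})$, $V^{\mathrm{sep}}:=V^{*,e_0}$. *)

(* R : realType, distributions on
   R^{1 x p} are probability measures on the measurable space p.-tuple R
   (product Borel sigma-algebra, as provided by measurable_structure.v). *)
From HB Require Import structures.
From mathcomp Require Import all_boot all_order all_algebra.
From mathcomp Require Import all_classical all_reals all_analysis.
Set Implicit Arguments. Unset Strict Implicit. Unset Printing Implicit Defensive.
Import Order.TTheory GRing.Theory Num.Theory.
Local Open Scope classical_set_scope.
Local Open Scope ring_scope.

Section Defs.
Variable R : realType.

Definition orth (p k : nat) : set 'M[R]_(p, k) :=
  [set V | V^T *m V = 1%:M].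

Definition centered_L2 (p : nat) (P : probability (p.-tuple R) R) : Prop :=
  (forall i : 'I_p, P.-integrable setT (fun x => (tnth x i)%:E)) /\
  (forall i : 'I_p, P.-integrable setT (fun x => (tnth x i ^+ 2)%:E)) /\
  (forall i : 'I_p, (\int[P]_x (tnth x i)%:E = 0)%E).

Definition cov (p : nat) (P : probability (p.-tuple R) R) : 'M[R]_p :=
  \matrix_(i, j) fine (\int[P]_x (tnth x i * tnth x j)%:E).

Definition normVar (p k : nat) (V : 'M[R]_(p, k)) (S : 'M[R]_p) : R :=
  \tr (V^T *m S *m V) / \tr S.

Definition normRCS (p k : nat) (V : 'M[R]_(p, k)) (S : 'M[R]_p) : R :=
  (\tr S - \tr (V^T *m S *m V)) / \tr S.

Definition normReg (p k : nat) (V : 'M[R]_(p, k)) (S : 'M[R]_p) : R :=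
  normRCS V S - inf [set normRCS W S | W in @orth p k].

End Defs.
Arguments orth {R} p k.

Inductive loss_kind := LnormRCS | LnegNormVar | LnormReg.

Section Defs2.
Variable R : realType.
Local Open Scope classical_set_scope.
Local Open Scope ring_scope.

Definition lossM (L : loss_kind) (p k : nat) (V : 'M[R]_(p, k)) (S : 'M[R]_p) : R :=
  match L with
  | LnormRCS => normRCS V S
  | LnegNormVar => - normVar V S
  | LnormReg => normReg V S
  end.

Definition lossP (L : loss_kind) (p k : nat) (V : 'M[R]_(p, k))
  (P : probability (p.-tuple R) R) : R := lossM L V (cov P).

Definition maxLoss (L : loss_kind) (p k E : nat) (Ps : 'I_E -> probability (p.-tuple R) R)
  (V : 'M[R]_(p, k)) : R :=
  sup [set lossP L V (Ps e) | e in [set: 'I_E]].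

Definition trnormalize (p : nat) (S : 'M[R]_p) : 'M[R]_p := (\tr S)^-1 *: S.

Definition Cnorm (p E : nat) (Ps : 'I_E -> probability (p.-tuple R) R) : set 'M[R]_p :=
  [set M | exists lam : 'I_E -> R, (forall e, 0 <= lam e) /\ \sum_e lam e = 1 /\
      M = \sum_e lam e *: trnormalize (cov (Ps e))].

Definition Pnorm (p E : nat) (Ps : 'I_E -> probability (p.-tuple R) R) :
  set (probability (p.-tuple R) R) :=
  [set P | centered_L2 P /\ 0 < \tr (cov P) /\ Cnorm Ps (trnormalize (cov P))].

Definition supLoss (L : loss_kind) (p k E : nat) (Ps : 'I_E -> probability (p.-tuple R) R)
  (V : 'M[R]_(p, k)) : R :=
  sup [set lossP L V P | P in Pnorm Ps].

Definition sources_ok (p E : nat) (Ps : 'I_E -> probability (p.-tuple R) R) : Prop :=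
  forall e, centered_L2 (Ps e) /\ 0 < \tr (cov (Ps e)).

Definition weights_ok (E : nat) (w : 'I_E -> R) : Prop :=
  (forall e, 0 < w e) /\ \sum_e w e = 1.

Definition is_poolPCA (p k E : nat) (Ps : 'I_E -> probability (p.-tuple R) R)
  (w : 'I_E -> R) (V : 'M[R]_(p, k)) : Prop :=
  orth p k V /\ forall W, orth p k W ->
    \tr (W^T *m (\sum_e w e *: cov (Ps e)) *m W) <=
    \tr (V^T *m (\sum_e w e *: cov (Ps e)) *m V).

Definition is_PCA (p k : nat) (S : 'M[R]_p) (V : 'M[R]_(p, k)) : Prop :=
  orth p k V /\ forall W, orth p k W -> \tr (W^T *m S *m W) <= \tr (V^T *m S *m V).

(* sepPCA solution: V^{*,e0} with e0 the smallest index minimizing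
   Tr((V^{*,e})^T Sigma_e V^{*,e}) *)
Definition is_sepPCA (p k E : nat) (Ps : 'I_E -> probability (p.-tuple R) R)
  (V : 'M[R]_(p, k)) : Prop :=
  exists (Vs : 'I_E -> 'M[R]_(p, k)) (e0 : 'I_E),
    (forall e, is_PCA (cov (Ps e)) (Vs e)) /\
    (forall e, \tr ((Vs e0)^T *m cov (Ps e0) *m Vs e0) <= \tr ((Vs e)^T *m cov (Ps e) *m Vs e)) /\
    (forall e : 'I_E, (e < e0)%N ->
       \tr ((Vs e0)^T *m cov (Ps e0) *m Vs e0) < \tr ((Vs e)^T *m cov (Ps e) *m Vs e)) /\
    V = Vs e0.

Definition is_robust_opt (L : loss_kind) (p k E : nat)
  (Ps : 'I_E -> probability (p.-tuple R) R) (V : 'M[R]_(p, k)) : Prop :=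
  orth p k V /\ forall W, orth p k W -> supLoss L Ps V <= supLoss L Ps W.

End Defs2.

From HB Require Import structures.
From mathcomp Require Import all_boot all_order all_algebra.
From mathcomp Require Import all_classical all_reals all_analysis.
From mathcomp Require Import measurable_realfun ring lra.
Set Implicit Arguments. Unset Strict Implicit. Unset Printing Implicit Defensive.
Import Order.TTheory GRing.Theory Num.Theory.
Local Open Scope classical_set_scope.
Local Open Scope ring_scope.

(* All three losses depend on a covariance only through its normalization
   S / Tr S, and there they are convex: L_normRCS and -L_normVar are affine in
   S / Tr S, and L_normReg is affine minus an infimum of affine functions.  A
   distribution of P_norm has normalized covariance sum_e lam_e Sigma_e / Tr
   Sigma_e, so its loss is at most sum_e lam_e L(V; P_e) <= max_e L(V; P_e);
   since every P_e lies in P_norm, the supremum over P_norm is that maximum,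
   and (i)-(iii) follow.  For (iv), take p = 2, k = 1 and two sources
   supported on the two coordinate axes, with variances 4 and 1.  Pooled PCA
   picks the first axis and separate PCA the second; each of them reconstructs
   one source with normalized error 1, while the direction (3/5, 4/5) keeps the
   worst normalized error at 16/25. *)

Section Convexity.
Variable R : realType.

Definition compress_tr (p k : nat) (W : 'M[R]_(p, k)) (S : 'M[R]_p) : R :=
  \tr (W^T *m S *m W).

Lemma compress_trZ p k (W : 'M[R]_(p, k)) c S :
  compress_tr W (c *: S) = c * compress_tr W S.
Proof. by rewrite /compress_tr -scalemxAr -scalemxAl mxtraceZ. Qed.

Lemma compress_tr_sum p k (W : 'M[R]_(p, k)) E (F : 'I_E -> 'M[R]_p) :
  compress_tr W (\sum_e F e) = \sum_e compress_tr W (F e).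
Proof. by rewrite /compress_tr mulmx_sumr mulmx_suml linear_sum. Qed.

Lemma normRCS_trnormalize p k (W : 'M[R]_(p, k)) S : \tr S != 0 ->
  normRCS W S = 1 - compress_tr W (trnormalize S).
Proof.
by move=> trS; rewrite /normRCS /trnormalize compress_trZ mulrBl divff // mulrC.
Qed.

Lemma oppr_normVar p k (W : 'M[R]_(p, k)) S : \tr S != 0 ->
  - normVar W S = normRCS W S - 1.
Proof. by move=> trS; rewrite /normRCS /normVar mulrBl divff //; ring. Qed.

Lemma orth_entry_le1 p k (W : 'M[R]_(p, k)) i c : orth p k W -> `|W i c| <= 1.
Proof.
move=> oW; have : (W^T *m W) c c = 1 by rewrite oW mxE eqxx.
rewrite mxE (bigD1 i) //= !mxE => Wcc.
have rest_ge0 : 0 <= \sum_(j < p | j != i) W^T c j * W j c.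
  by apply: sumr_ge0 => j _; rewrite mxE -expr2 sqr_ge0.
have : W i c ^+ 2 <= 1 by rewrite expr2 -Wcc lerDl.
by rewrite expr2 => Wic; rewrite ler_norml; apply/andP; split; nra.
Qed.

Lemma compress_tr_bound p k (W : 'M[R]_(p, k)) S : orth p k W ->
  `|compress_tr W S| <= \sum_(c < k) \sum_(j < p) \sum_(i < p) `|S i j|.
Proof.
move=> oW; rewrite /compress_tr /mxtrace.
apply: le_trans (ler_norm_sum _ _ _) _; apply: ler_sum => c _.
rewrite mxE; apply: le_trans (ler_norm_sum _ _ _) _; apply: ler_sum => j _.
rewrite mxE normrM -[X in _ <= X]mulr1.
apply: ler_pM (normr_ge0 _) (normr_ge0 _) _ (orth_entry_le1 j c oW).
apply: le_trans (ler_norm_sum _ _ _) _; apply: ler_sum => i _.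
rewrite !mxE normrM -[X in _ <= X]mul1r.
by apply: ler_wpM2r; [exact: normr_ge0 | exact: orth_entry_le1].
Qed.

Definition minRCS p k (S : 'M[R]_p) : R := inf [set normRCS W S | W in orth p k].

(* [inf] of a set that is not bounded below is a junk value, hence the bound. *)
Lemma minRCS_le p k (S : 'M[R]_p) (W : 'M[R]_(p, k)) : \tr S != 0 -> orth p k W ->
  minRCS k S <= normRCS W S.
Proof.
move=> trS oW; apply: ge_inf; last by exists W.
exists (1 - \sum_(c < k) \sum_(j < p) \sum_(i < p) `|trnormalize S i j|).
move=> _ [Z oZ <-]; rewrite normRCS_trnormalize // lerD2l lerN2.
exact: le_trans (ler_norm _) (compress_tr_bound _ oZ).
Qed.

Section ConvexCombination.
Variables (p E : nat) (S : 'M[R]_p) (Ss : 'I_E -> 'M[R]_p) (lam : 'I_E -> R).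
Hypotheses (trS : \tr S != 0) (trSs : forall e, \tr (Ss e) != 0).
Hypotheses (lam_ge0 : forall e, 0 <= lam e) (lam_sum1 : \sum_e lam e = 1).
Hypothesis S_conv : trnormalize S = \sum_e lam e *: trnormalize (Ss e).

Lemma normRCS_conv k (W : 'M[R]_(p, k)) :
  normRCS W S = \sum_e lam e * normRCS W (Ss e).
Proof.
rewrite normRCS_trnormalize // S_conv compress_tr_sum.
under [RHS]eq_bigr => e _ do rewrite normRCS_trnormalize // mulrBr mulr1.
by rewrite sumrB lam_sum1; under eq_bigr => e _ do rewrite compress_trZ.
Qed.

Lemma minRCS_conv k : @orth R p k !=set0 ->
  \sum_e lam e * minRCS k (Ss e) <= minRCS k S.
Proof.
move=> [V oV]; apply: lb_le_inf; first by exists (normRCS V S), V.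
move=> _ [W oW <-]; rewrite normRCS_conv; apply: ler_sum => e _.
by apply: ler_wpM2l => //; apply: minRCS_le.
Qed.

Lemma lossM_conv L k (V : 'M[R]_(p, k)) : orth p k V ->
  lossM L V S <= \sum_e lam e * lossM L V (Ss e).
Proof.
move=> oV; case: L => /=.
- by rewrite normRCS_conv.
- rewrite oppr_normVar // normRCS_conv.
  under [X in _ <= X]eq_bigr => e _ do rewrite oppr_normVar // mulrBr mulr1.
  by rewrite sumrB lam_sum1.
- rewrite /normReg -/(minRCS k S) normRCS_conv.
  under [X in _ <= X]eq_bigr => e _ do rewrite -/(minRCS k (Ss e)) mulrBr.
  by rewrite sumrB lerD2l lerN2 minRCS_conv //; exists V.
Qed.

End ConvexCombination.
End Convexity.

Section RobustRisk.
Variables (R : realType) (L : loss_kind) (p k E : nat).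
Variable Ps : 'I_E -> probability (p.-tuple R) R.

Lemma lossP_le_maxLoss (V : 'M[R]_(p, k)) e : lossP L V (Ps e) <= maxLoss L Ps V.
Proof.
apply: ub_le_sup; last by exists e.
exists (\sum_e `|lossP L V (Ps e)|) => _ [e' _ <-].
rewrite (bigD1 e') //=; apply: le_trans (ler_norm _) _.
by rewrite lerDl sumr_ge0 // => ? _; apply: normr_ge0.
Qed.

Lemma maxLoss_le (V : 'M[R]_(p, k)) c : (0 < E)%N ->
  (forall e, lossP L V (Ps e) <= c) -> maxLoss L Ps V <= c.
Proof.
move=> E_gt0 le_c; apply: ge_sup => [|_ [e _ <-]]; last exact: le_c.
by exists (lossP L V (Ps (Ordinal E_gt0))), (Ordinal E_gt0).
Qed.

Hypothesis Ps_ok : sources_ok Ps.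

Lemma sources_in_Pnorm e : Pnorm Ps (Ps e).
Proof.
have [cPe trPe] := Ps_ok e; do 2!split => //.
exists (fun e' => (e' == e)%:R); split; first by move=> e'; rewrite ler0n.
split; first by rewrite (bigD1 e) //= eqxx big1 ?addr0 // => e' /negPf ->.
rewrite (bigD1 e) //= eqxx scale1r big1 ?addr0 // => e' /negPf ->.
by rewrite scale0r.
Qed.

Lemma lossP_Pnorm_le (V : 'M[R]_(p, k)) P : orth p k V -> Pnorm Ps P ->
  lossP L V P <= maxLoss L Ps V.
Proof.
move=> oV [_ [trP [lam [lam_ge0 [lam_sum1 P_conv]]]]].
have trPs e : \tr (cov (Ps e)) != 0 by have [_ /gt_eqF ->] := Ps_ok e.
have trP0 : \tr (cov P) != 0 by rewrite gt_eqF.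
apply: le_trans (lossM_conv trP0 trPs lam_ge0 lam_sum1 P_conv L oV) _.
rewrite -[X in _ <= X]mul1r -lam_sum1 mulr_suml.
by apply: ler_sum => e _; apply: ler_wpM2l (lossP_le_maxLoss V e).
Qed.

Lemma supLoss_maxLoss (V : 'M[R]_(p, k)) : (0 < E)%N -> orth p k V ->
  supLoss L Ps V = maxLoss L Ps V.
Proof.
move=> E_gt0 oV; apply/eqP; rewrite eq_le; apply/andP; split.
  apply: ge_sup; last by move=> _ [P PP <-]; apply: lossP_Pnorm_le.
  exists (lossP L V (Ps (Ordinal E_gt0))), (Ps (Ordinal E_gt0)) => //.
  exact: sources_in_Pnorm.
apply: maxLoss_le => // e; apply: ub_le_sup; last first.
  by exists (Ps e) => //; apply: sources_in_Pnorm.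
by exists (maxLoss L Ps V) => _ [P PP <-]; apply: lossP_Pnorm_le.
Qed.

End RobustRisk.

Section UniformTwoPoint.
Context d (T : measurableType d) (R : realType).

Definition unif2 (a b : T) :=
  measure_add (mscale (2^-1)%:nng (@dirac _ T a R)) (mscale (2^-1)%:nng (@dirac _ T b R)).
HB.instance Definition _ a b := Measure.on (unif2 a b).

Lemma unif2T a b : unif2 a b setT = 1%E.
Proof.
rewrite /unif2 measure_addE.
transitivity ((2^-1 : R)%:E * \d_a setT + (2^-1 : R)%:E * \d_b setT)%E; first by [].
by rewrite !diracT !mule1 -EFinD; congr EFin; field.
Qed.
HB.instance Definition _ a b := Measure_isProbability.Build _ _ _ (unif2 a b) (unif2T a b).

Local Open Scope ereal_scope.

Lemma ge0_integral_unif2 (a b : T) (g : T -> \bar R) :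
  measurable_fun setT g -> (forall x, 0 <= g x) ->
  \int[unif2 a b]_x g x = (2^-1)%:E * g a + (2^-1)%:E * g b.
Proof.
move=> mg g_ge0; rewrite ge0_integral_measure_add // !ge0_integral_mscale //.
by rewrite !integral_dirac // !diracT !mul1e.
Qed.

Lemma integrable_unif2 (a b : T) (f : T -> R) : measurable_fun setT f ->
  (unif2 a b).-integrable setT (EFin \o f).
Proof.
move=> mf; have mfe : measurable_fun setT (EFin \o f) by exact/measurable_EFinP.
apply/integrableP; split => //.
rewrite ge0_integral_unif2 //; last exact: measurableT_comp.
by rewrite -!EFinM -EFinD ltry.
Qed.

Lemma integral_unif2 (a b : T) (f : T -> R) : measurable_fun setT f ->
  \int[unif2 a b]_x (f x)%:E = (2^-1 * f a + 2^-1 * f b)%:E.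
Proof.
move=> mf.
have mfp : measurable_fun setT (EFin \o f^\+%R) by exact/measurable_EFinP/measurable_funrpos.
have mfn : measurable_fun setT (EFin \o f^\-%R) by exact/measurable_EFinP/measurable_funrneg.
rewrite integralE funerpos funerneg !ge0_integral_unif2 //; last 2 first.
- by move=> x; rewrite lee_fin funrneg_ge0.
- by move=> x; rewrite lee_fin funrpos_ge0.
rewrite /= -!EFinM -!EFinD; congr EFin.
have posBneg x : f x = (f^\+ x - f^\- x)%R by rewrite -[in LHS](funrposBneg f).
by rewrite (posBneg a) (posBneg b); ring.
Qed.

End UniformTwoPoint.
Arguments unif2 {d T R}.

Section SymmetricTwoPoint.
Variables (R : realType) (p : nat).

Definition sym2 (u : p.-tuple R) : probability (p.-tuple R) R :=
  unif2 u (map_tuple -%R u).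

Lemma centered_sym2 u : centered_L2 (sym2 u).
Proof.
have mt i : measurable_fun setT (fun x : p.-tuple R => tnth x i) by exact: measurable_tnth.
split; [|split] => i.
- exact: integrable_unif2.
- exact/integrable_unif2/measurable_funX.
- by rewrite integral_unif2 // tnth_map -mulrDr addrN mulr0.
Qed.

Lemma cov_sym2 u : cov (sym2 u) = \matrix_(i, j) (tnth u i * tnth u j).
Proof.
apply/matrixP => i j; rewrite !mxE integral_unif2 /=.
  by rewrite !tnth_map mulrNN; field.
by apply: measurable_funM; exact: measurable_tnth.
Qed.

Lemma tr_cov_sym2 u : \tr (cov (sym2 u)) = \sum_i tnth u i ^+ 2.
Proof. by rewrite cov_sym2 /mxtrace; apply: eq_bigr => i _; rewrite mxE expr2. Qed.

Lemma compress_tr_cov_sym2 k (W : 'M[R]_(p, k)) u :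
  compress_tr W (cov (sym2 u)) = \sum_c (\sum_i tnth u i * W i c) ^+ 2.
Proof.
pose U : 'rV[R]_p := \row_i tnth u i.
have -> : cov (sym2 u) = U^T *m U.
  by rewrite cov_sym2; apply/matrixP => i j; rewrite !mxE big_ord1 !mxE.
rewrite /compress_tr mulmxA -trmx_mul -mulmxA /mxtrace; apply: eq_bigr => c _.
rewrite !mxE big_ord1 !mxE -expr2; congr (_ ^+ 2).
by apply: eq_bigr => i _; rewrite !mxE.
Qed.

End SymmetricTwoPoint.

Section Counterexample.
Variable R : realType.

Lemma ord2_ind (P : 'I_2 -> Prop) : P ord0 -> P ord_max -> forall e, P e.
Proof.
move=> P0 P1 [[|[|//]]] lt_e2.
- by have -> : Ordinal lt_e2 = ord0 by exact: val_inj.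
- by have -> : Ordinal lt_e2 = ord_max by exact: val_inj.
Qed.

Lemma big_ord2 (F : 'I_2 -> R) : \sum_i F i = F ord0 + F ord_max.
Proof. by rewrite big_ord_recl big_ord1; congr (_ + F _); exact: val_inj. Qed.

Definition src (e : 'I_2) : probability (2.-tuple R) R :=
  sym2 (if e == ord0 then [tuple 2; 0] else [tuple 0; 1]).

Definition col2 (x y : R) : 'cV[R]_2 := \col_i (if i == ord0 then x else y).

Lemma orth_col2 (W : 'cV[R]_2) :
  orth 2 1 W <-> W ord0 ord0 ^+ 2 + W ord_max ord0 ^+ 2 = 1.
Proof.
have WtW : (W^T *m W) ord0 ord0 = W ord0 ord0 ^+ 2 + W ord_max ord0 ^+ 2.
  by rewrite !mxE big_ord2 !mxE !expr2.
split => [oW | norm1]; first by rewrite -WtW oW mxE.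
by apply/matrixP => i j; rewrite !ord1 WtW norm1 mxE.
Qed.

Lemma compress_tr_src0 (W : 'cV[R]_2) :
  compress_tr W (cov (src ord0)) = 4 * W ord0 ord0 ^+ 2.
Proof. by rewrite compress_tr_cov_sym2 big_ord1 big_ord2 !(tnth_nth 0) /=; ring. Qed.

Lemma compress_tr_src1 (W : 'cV[R]_2) :
  compress_tr W (cov (src ord_max)) = W ord_max ord0 ^+ 2.
Proof. by rewrite compress_tr_cov_sym2 big_ord1 big_ord2 !(tnth_nth 0) /=; ring. Qed.

Lemma tr_cov_src0 : \tr (cov (src ord0)) = 4.
Proof. by rewrite tr_cov_sym2 big_ord2 !(tnth_nth 0) /=; ring. Qed.

Lemma tr_cov_src1 : \tr (cov (src ord_max)) = 1.
Proof. by rewrite tr_cov_sym2 big_ord2 !(tnth_nth 0) /=; ring. Qed.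

Lemma sources_ok_src : sources_ok src.
Proof.
apply: ord2_ind; split; rewrite ?tr_cov_src0 ?tr_cov_src1 //; exact: centered_sym2.
Qed.

Lemma normRCS_src0 (W : 'cV[R]_2) :
  normRCS W (cov (src ord0)) = 1 - W ord0 ord0 ^+ 2.
Proof. by rewrite /normRCS tr_cov_src0 -/(compress_tr _ _) compress_tr_src0; field. Qed.

Lemma normRCS_src1 (W : 'cV[R]_2) :
  normRCS W (cov (src ord_max)) = 1 - W ord_max ord0 ^+ 2.
Proof. by rewrite /normRCS tr_cov_src1 -/(compress_tr _ _) compress_tr_src1 divr1. Qed.

Definition e1 := col2 1 0.
Definition e2 := col2 0 1.
Definition wmix := col2 (3/5) (4/5).

Lemma orth_e1 : orth 2 1 e1. Proof. by apply/orth_col2; rewrite !mxE /=; ring. Qed.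
Lemma orth_e2 : orth 2 1 e2. Proof. by apply/orth_col2; rewrite !mxE /=; ring. Qed.
Lemma orth_wmix : orth 2 1 wmix. Proof. by apply/orth_col2; rewrite !mxE /=; field. Qed.

Lemma minRCS_src e : minRCS 1 (cov (src e)) = 0.
Proof.
apply/eqP; rewrite eq_le; apply/andP; split.
  move: e; apply: ord2_ind.
  - apply: le_trans (minRCS_le _ orth_e1) _; first by rewrite tr_cov_src0.
    by rewrite normRCS_src0 !mxE /= expr1n subrr.
  - apply: le_trans (minRCS_le _ orth_e2) _; first by rewrite tr_cov_src1.
    by rewrite normRCS_src1 !mxE /= expr1n subrr.
apply: lb_le_inf; first by exists (normRCS e1 (cov (src e))), e1 => //; exact: orth_e1.
move=> _ [W /orth_col2 normW <-]; move: e; apply: ord2_ind.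
- by rewrite normRCS_src0; nra.
- by rewrite normRCS_src1; nra.
Qed.

Definition loss_offset (L : loss_kind) : R := if L is LnegNormVar then 1 else 0.

Lemma lossP_src L e (W : 'cV[R]_2) :
  lossP L W (src e) = normRCS W (cov (src e)) - loss_offset L.
Proof.
have trS : \tr (cov (src e)) != 0.
  by move: e; apply: ord2_ind; rewrite ?tr_cov_src0 ?tr_cov_src1.
case: L; rewrite /lossP /=.
- by rewrite subr0.
- by rewrite oppr_normVar.
- by rewrite /normReg -/(minRCS 1 _) minRCS_src subr0.
Qed.

Lemma maxLoss_wmix L : maxLoss L src wmix <= 16/25 - loss_offset L.
Proof.
apply: maxLoss_le => //; apply: ord2_ind; rewrite lossP_src lerD2r.
- by rewrite normRCS_src0 !mxE /=; lra.
- by rewrite normRCS_src1 !mxE /=; lra.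
Qed.

Lemma not_robust_opt_src L (V : 'cV[R]_2) e : orth 2 1 V ->
  normRCS V (cov (src e)) = 1 -> ~ is_robust_opt L src V.
Proof.
move=> oV worstV [_ /(_ wmix orth_wmix)].
have [src_ok oW] := (sources_ok_src, orth_wmix).
rewrite !supLoss_maxLoss //.
have := lossP_le_maxLoss L src V e; have := maxLoss_wmix L.
rewrite lossP_src worstV; lra.
Qed.

Definition wts : 'I_2 -> R := fun=> 2^-1.

Lemma weights_ok_wts : weights_ok wts.
Proof. by split => [e|]; rewrite ?big_ord2 /wts ?invr_gt0 //; field. Qed.

Lemma poolPCA_e1 : is_poolPCA src wts e1.
Proof.
split => [|W /orth_col2 normW]; first exact: orth_e1.
rewrite -!/(compress_tr _ _) !compress_tr_sum !big_ord2 !compress_trZ.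
rewrite !compress_tr_src0 !compress_tr_src1 /wts !mxE /=; nra.
Qed.

Lemma sepPCA_e2 : is_sepPCA src e2.
Proof.
exists (fun e => if e == ord0 then e1 else e2), ord_max.
split; [|split; [|split]] => //.
- apply: ord2_ind; (split; first by [exact: orth_e1|exact: orth_e2]);
  move=> W /orth_col2 normW;
  rewrite -!/(compress_tr _ _) ?compress_tr_src0 ?compress_tr_src1 !mxE /=; nra.
- apply: ord2_ind;
  rewrite /= -!/(compress_tr _ _) ?compress_tr_src0 ?compress_tr_src1 !mxE /=; lra.
- apply: ord2_ind => // _;
  rewrite /= -!/(compress_tr _ _) compress_tr_src0 compress_tr_src1 !mxE /=; lra.
Qed.

End Counterexample.

Theorem mainTheorem3 (R : realType) (L : loss_kind) :
  (forall (p k E : nat) (Ps : 'I_E -> probability (p.-tuple R) R),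
    (1 <= p)%N -> (1 <= k)%N -> (k <= p)%N -> (1 <= E)%N ->
    sources_ok Ps ->
    (forall V : 'M[R]_(p, k), orth p k V -> supLoss L Ps V = maxLoss L Ps V) /\
    (forall V W : 'M[R]_(p, k), orth p k V -> orth p k W ->
       maxLoss L Ps V < maxLoss L Ps W -> supLoss L Ps V < supLoss L Ps W) /\
    (forall Vstar : 'M[R]_(p, k), orth p k Vstar ->
       (forall V, orth p k V -> maxLoss L Ps Vstar <= maxLoss L Ps V) ->
       is_robust_opt L Ps Vstar)) /\
  (exists (p k E : nat) (Ps : 'I_E -> probability (p.-tuple R) R) (w : 'I_E -> R)
          (V : 'M[R]_(p, k)),
     [/\ (1 <= k)%N /\ (k <= p)%N, sources_ok Ps, weights_ok w,
         is_poolPCA Ps w V & ~ is_robust_opt L Ps V]) /\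
  (exists (p k E : nat) (Ps : 'I_E -> probability (p.-tuple R) R) (w : 'I_E -> R)
          (V : 'M[R]_(p, k)),
     [/\ (1 <= k)%N /\ (k <= p)%N, sources_ok Ps, weights_ok w,
         is_sepPCA Ps V & ~ is_robust_opt L Ps V]).
Proof.
split.
  move=> p k E Ps _ _ _ E_gt0 Ps_ok; split; [|split].
  - by move=> V oV; rewrite supLoss_maxLoss.
  - by move=> V W oV oW; rewrite !supLoss_maxLoss.
  - move=> Vstar oVstar Vstar_min; split => // W oW.
    by rewrite !supLoss_maxLoss //; exact: Vstar_min.
split.
- exists 2%N, 1%N, 2%N, (@src R), (@wts R), (@e1 R); split => //.
  + exact: sources_ok_src.
  + exact: weights_ok_wts.
  + exact: poolPCA_e1.
  + apply: (@not_robust_opt_src _ _ _ ord_max (orth_e1 R)).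
    by rewrite normRCS_src1 !mxE /= expr0n subr0.
- exists 2%N, 1%N, 2%N, (@src R), (@wts R), (@e2 R); split => //.
  + exact: sources_ok_src.
  + exact: weights_ok_wts.
  + exact: sepPCA_e2.
  + apply: (@not_robust_opt_src _ _ _ ord0 (orth_e2 R)).
    by rewrite normRCS_src0 !mxE /= expr0n subr0.
Qed.
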